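(* Let $V$ be a braided vector space of diagonal type over a field $F$ of characteristic zero with basis $x_1,\dots,x_n$ and braiding $C(x_i\otimes x_j)=p_{i,j}x_j\otimes x_i$, and let $\mathfrak B(V)$ be its Nichols algebra. (i) If there exist $i\ne j$ such that ($p_{i,j}\ne p_{j,i}^2$ or $p_{j,i}\ne p_{i,j}^2$) and $\operatorname{ord}(p_{i,i})\in\{1,\infty\}$, then $\dim\mathfrak L(V)_R=\infty$. (ii) If there exist $i\ne j$ such that ($p_{i,j}\ne1$ or $p_{j,i}\ne1$) and $\operatorname{ord}(p_{i,i})\in\{1,\infty\}$, then $\dim\mathfrak L(V)_L=\infty$.
   Context: $\mathfrak B(V)=T(V)/\bigoplus_{m\ge2}\ker S_m$, $\mathbb Z^n$-graded with $\deg x_i=e_i$; $p_{u,v}=\prod p_{i,j}^{a_ib_j}$ for $\deg u=\sum a_ie_i,\deg v=\sum b_je_j$. $\mathfrak L(V)_L$ (resp. $\mathfrak L(V)_R$) is the Lie subalgebra of $\mathfrak B(V)$ generated by $V$ under $[u,v]_L=p_{v,u}uv-p_{u,v}vu$ (resp. $[u,v]_R=p_{u,v}uv-p_{v,u}vu$). $\operatorname{ord}(q)$ is the multiplicative order of $q$ ($\infty$ if not a root of unity; $\operatorname{ord}(1)=1$). *)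

From HB Require Import structures.
From mathcomp Require Import all_boot all_order all_algebra all_fingroup.
Set Implicit Arguments. Unset Strict Implicit. Unset Printing Implicit Defensive.
Import Order.TTheory GRing.Theory Num.Theory.
Local Open Scope ring_scope.

Section Nichols.
Variables (F : fieldType) (n : nat) (p : 'I_n -> 'I_n -> F).

(* words in the basis letters x_1..x_n, i.e. the monomial basis of T(V) *)
Definition word := seq 'I_n.

(* elements of T(V) as formal finite sums  sum_k c_k * w_k *)
Definition tens := seq (F * word).

Definition tcoef (u : tens) (w : word) : F := \sum_(a <- u | a.2 == w) a.1.
Definition tscale (c : F) (u : tens) : tens := [seq (c * a.1, a.2) | a <- u].
Definition tmul (u v : tens) : tens := [seq (a.1 * b.1, a.2 ++ b.2) | a <- u, b <- v].
Definition tletter (i : 'I_n) : tens := [:: (1, [:: i])].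

(* Matsumoto lift T_s of s in S_m to V^{(x) m} for the diagonal braiding
   c(x_i (x) x_j) = p_{i,j} x_j (x) x_i: letter at position k moves to position
   s k, each inverted pair (k<l, s k > s l) contributes p_{w_k, w_l}. *)
Definition braid_coef (w : word) (s : 'S_(size w)) : F :=
  \prod_(k : 'I_(size w)) \prod_(l : 'I_(size w) | (k < l)%N && (s l < s k)%N)
     p (tnth (in_tuple w) k) (tnth (in_tuple w) l).
Definition perm_word (w : word) (s : 'S_(size w)) : word :=
  [seq tnth (in_tuple w) ((s^-1)%g j) | j <- enum 'I_(size w)].

(* quantum symmetrizer S = sum_m S_m, S_m = sum_{s in S_m} T_s, extended linearly *)
Definition symmetrizer (u : tens) : tens :=
  flatten [seq [seq (a.1 * braid_coef s, perm_word s) | s <- enum 'S_(size a.2)]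
          | a <- u].

(* u maps to 0 in B(V) = T(V) / (+)_{m>=2} ker S_m  (S_0, S_1 are the identity) *)
Definition zero_in_B (u : tens) : Prop := forall w, tcoef (symmetrizer u) w = 0.

Definition bichar (a b : 'I_n -> nat) : F :=
  \prod_(i < n) \prod_(j < n) p i j ^+ (a i * b j).

(* iterated brackets of generators *)
Inductive btree := BLeaf of 'I_n | BNode of btree & btree.

Fixpoint bdeg (t : btree) : 'I_n -> nat :=
  match t with
  | BLeaf i => fun j => nat_of_bool (i == j)
  | BNode l r => fun j => (bdeg l j + bdeg r j)%N
  end.

(* [u,v]_L = p_{v,u} uv - p_{u,v} vu *)
Fixpoint evalL (t : btree) : tens :=
  match t with
  | BLeaf i => tletter i
  | BNode l r =>
      tscale (bichar (bdeg r) (bdeg l)) (tmul (evalL l) (evalL r)) ++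
      tscale (- bichar (bdeg l) (bdeg r)) (tmul (evalL r) (evalL l))
  end.

(* [u,v]_R = p_{u,v} uv - p_{v,u} vu *)
Fixpoint evalR (t : btree) : tens :=
  match t with
  | BLeaf i => tletter i
  | BNode l r =>
      tscale (bichar (bdeg l) (bdeg r)) (tmul (evalR l) (evalR r)) ++
      tscale (- bichar (bdeg r) (bdeg l)) (tmul (evalR r) (evalR l))
  end.

(* The Lie subalgebra generated by V is the span (in B(V)) of the values of all
   iterated brackets; it is infinite-dimensional iff for every N it contains N
   elements that are linearly independent in B(V). *)
Definition infinite_dim_span (ev : btree -> tens) : Prop :=
  forall N : nat, exists ts : N.-tuple btree,
    forall c : 'I_N -> F,
      zero_in_B (flatten [seq tscale (c k) (ev (tnth ts k)) | k <- enum 'I_N]) ->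
      forall k, c k = 0.

End Nichols.

Definition root_of_unity (F : fieldType) (q : F) : Prop :=
  exists k : nat, (0 < k)%N /\ q ^+ k = 1.

Definition ord_1_or_inf (F : fieldType) (q : F) : Prop :=
  q = 1 \/ ~ root_of_unity q.

From HB Require Import structures.
From mathcomp Require Import all_boot all_order all_algebra all_fingroup.
From mathcomp Require Import zify ring.
Import Order.TTheory GRing.Theory Num.Theory.
Local Open Scope ring_scope.

Set Implicit Arguments. Unset Strict Implicit. Unset Printing Implicit Defensive.

(* Fix i <> j such that q := p_{i,i} has order 1 or infinity, and let t_m be the bracket
   [x_i, [x_i, ..., [x_i, x_j]]] with m copies of x_i.  Its value is a combination of the words
   x_i^k x_j x_i^(m-k), and the coefficient of x_j x_i^m (resp. x_i^m x_j) in its quantum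
   symmetrization is a product of one factor per bracket times the q-factorial [m]_q!, which is
   nonzero in characteristic zero since q is not a nontrivial root of unity.  For [-,-]_R the
   factors are q^k (p_{i,j}^2 - p_{j,i}) resp. q^k (p_{i,j} - p_{j,i}^2), for [-,-]_L they are
   q^k p_{i,j} (p_{j,i} - 1) resp. q^k p_{j,i} (1 - p_{i,j}).  So under either hypothesis no t_m
   vanishes in B(V), and the t_m, having pairwise distinct degrees, are linearly independent. *)

Section BigLiftPerm.
Variables (R : Type) (idx : R) (op : Monoid.com_law idx).

Lemma big_lift_perm m (i0 j0 : 'I_m.+1) (P : pred 'S_m.+1) (G : 'S_m.+1 -> R) :
  \big[op/idx]_(s : 'S_m.+1 | (s i0 == j0) && P s) G s =
  \big[op/idx]_(t : 'S_m | P (lift_perm i0 j0 t)) G (lift_perm i0 j0 t).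
Proof.
rewrite (reindex (lift_perm i0 j0)); last first.
  pose ulsf i (s : 'S_m.+1) k := odflt k (unlift (s i) (s (lift i k))).
  have ulsfK i (s : 'S_m.+1) k: lift (s i) (ulsf i s k) = s (lift i k).
    rewrite /ulsf; have:= neq_lift i k.
    by rewrite -(can_eq (permK s)) => /unlift_some[] ? ? ->.
  have inj_ulsf: injective (ulsf i0 _).
    move=> s; apply: can_inj (ulsf (s i0) s^-1%g) _ => k'.
    by rewrite {1}/ulsf ulsfK !permK liftK.
  exists (fun s => perm (inj_ulsf s)) => [s _ | s].
    by apply/permP=> k'; rewrite permE /ulsf lift_perm_lift lift_perm_id liftK.
  move/andP=> [/(s _ =P _) si0 _]; apply/permP=> k.
  case: (unliftP i0 k) => [k'|] ->; rewrite ?lift_perm_id //.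
  by rewrite lift_perm_lift -si0 permE ulsfK.
by apply: eq_bigl => t; rewrite lift_perm_id eqxx.
Qed.

Lemma bigD1_ord_if m (r : 'I_m.+1) (P : pred 'I_m.+1) (G : 'I_m.+1 -> R) :
  \big[op/idx]_(k | P k) G k =
  op (if P r then G r else idx) (\big[op/idx]_(k : 'I_m | P (lift r k)) G (lift r k)).
Proof. by rewrite big_mkcond (bigD1_ord r) //=; congr (op _ _); rewrite [RHS]big_mkcond. Qed.

End BigLiftPerm.

Lemma ltn_bump2 h k l : (bump h k < bump h l)%N = (k < l)%N.
Proof. by rewrite !ltnNge leq_bump2. Qed.

Lemma bump_ltn h k : (bump h k < h)%N = (k < h)%N.
Proof. by rewrite /bump; case: leqP => hk; lia. Qed.

Lemma ltn_bump h k : (h < bump h k)%N = (h <= k)%N.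
Proof. by rewrite /bump; case: leqP => hk; lia. Qed.

Lemma prodr_ord_ltn (R : comSemiRingType) m r (x : R) : (r <= m)%N ->
  \prod_(k < m | (k < r)%N) x = x ^+ r.
Proof.
move=> le_rm; rewrite -(@big_ord_widen_cond _ _ _ r m xpredT (fun=> x) le_rm).
by rewrite prodr_const card_ord.
Qed.

Lemma prodr_ord_geq (R : comSemiRingType) m r (x : R) :
  \prod_(k < m | (r <= k)%N) x = x ^+ (m - r).
Proof. by rewrite -(big_geq_mkord _ _ xpredT (fun=> x)) prodr_const_nat. Qed.

Section SymmetrizerCoefficient.
Variables (F : fieldType) (n : nat) (p : 'I_n -> 'I_n -> F).

(* Words are functions 'I_m -> 'I_n, so that deleting a letter is precomposition with [lift];
   [braid_coef w] and [perm_word w] are [fbraid_coef] and [fperm_word] at [tnth (in_tuple w)]. *)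
Definition fbraid_coef m (f : 'I_m -> 'I_n) (s : 'S_m) : F :=
  \prod_(k : 'I_m) \prod_(l : 'I_m | (k < l)%N && (s l < s k)%N) p (f k) (f l).

Definition fperm_word m (f : 'I_m -> 'I_n) (s : 'S_m) : seq 'I_n :=
  [seq f ((s^-1)%g j) | j <- enum 'I_m].

Definition sym_coef m (f : 'I_m -> 'I_n) (y : seq 'I_n) : F :=
  \sum_(s : 'S_m | fperm_word f s == y) fbraid_coef f s.

Lemma eq_sym_coef m (f g : 'I_m -> 'I_n) y : f =1 g -> sym_coef f y = sym_coef g y.
Proof.
move=> fg; rewrite /sym_coef /fperm_word /fbraid_coef; apply: eq_big => s.
  by rewrite (eq_map (fun j => fg _)).
by move=> _; apply: eq_bigr => k _; apply: eq_bigr => l _; rewrite !fg.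
Qed.

Lemma sym_coef_size m (f : 'I_m -> 'I_n) y : size y != m -> sym_coef f y = 0.
Proof.
move=> hy; rewrite /sym_coef big_pred0 // => s; apply/negbTE; apply: contra hy => /eqP <-.
by rewrite /fperm_word size_map size_enum_ord.
Qed.

Lemma sym_coef_lift_perm m (f : 'I_m.+1 -> 'I_n) (h : 'I_m.+1) y :
  sym_coef f y = \sum_(r : 'I_m.+1) \sum_(t : 'S_m | fperm_word f (lift_perm r h t) == y)
                    fbraid_coef f (lift_perm r h t).
Proof.
rewrite /sym_coef (partition_big (fun s : 'S_m.+1 => (s^-1)%g h) predT) //=.
apply: eq_bigr => r _; rewrite -(big_lift_perm _ _ _ (fun s => fperm_word f s == y)).
by apply: eq_bigl => s; rewrite andbC -(inj_eq (@perm_inj _ s)) permKV eq_sym.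
Qed.

Lemma fperm_word_lift_perm0 m (f : 'I_m.+1 -> 'I_n) r t :
  fperm_word f (lift_perm r ord0 t) = f r :: fperm_word (f \o lift r) t.
Proof.
rewrite /fperm_word enum_ordSl /= lift_permV lift_perm_id -map_comp; congr (_ :: _).
by apply: eq_map => k /=; rewrite lift_perm_lift.
Qed.

Lemma fperm_word_lift_perm_max m (f : 'I_m.+1 -> 'I_n) r t :
  fperm_word f (lift_perm r ord_max t) = rcons (fperm_word (f \o lift r) t) (f r).
Proof.
rewrite /fperm_word enum_ordSr map_rcons lift_permV lift_perm_id -map_comp.
congr (rcons _ _); apply: eq_map => k /=.
have -> : widen_ord (leqnSn m) k = lift ord_max k by apply/val_inj/esym/lift_max.
by rewrite lift_perm_lift.
Qed.

Lemma fbraid_coef_lift_perm0 m (f : 'I_m.+1 -> 'I_n) r t :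
  fbraid_coef f (lift_perm r ord0 t) =
  (\prod_(k : 'I_m | (k < r)%N) p (f (lift r k)) (f r)) * fbraid_coef (f \o lift r) t.
Proof.
rewrite /fbraid_coef (bigD1_ord_if _ r) /= big1 ?mul1r; last first.
  by move=> l /andP[_]; rewrite lift_perm_id.
rewrite [X in X * _]big_mkcond -big_split /=; apply: eq_bigr => k _.
rewrite (bigD1_ord_if _ r) lift_perm_id lift_perm_lift /= bump_ltn.
congr (_ * _); last by apply: eq_bigl => l; rewrite lift_perm_lift /= !ltn_bump2.
by case: (k < r)%N.
Qed.

Lemma fbraid_coef_lift_perm_max m (f : 'I_m.+1 -> 'I_n) r t :
  fbraid_coef f (lift_perm r ord_max t) =
  (\prod_(l : 'I_m | (r <= l)%N) p (f r) (f (lift r l))) * fbraid_coef (f \o lift r) t.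
Proof.
rewrite /fbraid_coef (bigD1_ord_if _ r) /=; congr (_ * _).
  rewrite (bigD1_ord_if _ r) ltnn /= mul1r; apply: eq_bigl => l.
  by rewrite ltn_bump lift_perm_id lift_perm_lift lift_max ltn_ord andbT.
apply: eq_bigr => k _.
rewrite (bigD1_ord_if _ r) lift_perm_id lift_perm_lift.
rewrite [(ord_max < _)%N]ltnNge leq_ord andbF /= mul1r.
by apply: eq_bigl => l; rewrite lift_perm_lift /= !ltn_bump2.
Qed.

Lemma sym_coef_cons m (f : 'I_m -> 'I_n) z y :
  sym_coef f (z :: y) = \sum_(r : 'I_m | f r == z)
     (\prod_(k : 'I_m.-1 | (k < r)%N) p (f (lift r k)) (f r)) * sym_coef (f \o lift r) y.
Proof.
case: m f => [|m] f.
  by rewrite big_ord0 /sym_coef big1 // => s; rewrite /fperm_word enum_ord0.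
rewrite (sym_coef_lift_perm _ ord0) [RHS]big_mkcond; apply: eq_bigr => r _.
case: (eqVneq (f r) z) => [<-|fz].
  rewrite mulr_sumr; apply: eq_big => t.
    by rewrite fperm_word_lift_perm0 eqseq_cons eqxx.
  by rewrite fbraid_coef_lift_perm0.
by rewrite big1 // => t; rewrite fperm_word_lift_perm0 eqseq_cons (negbTE fz).
Qed.

Lemma sym_coef_rcons m (f : 'I_m -> 'I_n) z y :
  sym_coef f (rcons y z) = \sum_(r : 'I_m | f r == z)
     (\prod_(l : 'I_m.-1 | (r <= l)%N) p (f r) (f (lift r l))) * sym_coef (f \o lift r) y.
Proof.
case: m f => [|m] f.
  by rewrite big_ord0 /sym_coef big1 // => s; rewrite /fperm_word enum_ord0; case: y.
rewrite (sym_coef_lift_perm _ ord_max) [RHS]big_mkcond; apply: eq_bigr => r _.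
case: (eqVneq (f r) z) => [<-|fz].
  rewrite mulr_sumr; apply: eq_big => t.
    by rewrite fperm_word_lift_perm_max eqseq_rcons eqxx andbT.
  by rewrite fbraid_coef_lift_perm_max.
by rewrite big1 // => t; rewrite fperm_word_lift_perm_max eqseq_rcons (negbTE fz) andbF.
Qed.

End SymmetrizerCoefficient.

Definition qfact (F : nzSemiRingType) (q : F) m := \prod_(k < m) \sum_(r < k.+1) q ^+ r.

Lemma qfactS (F : nzSemiRingType) (q : F) m :
  qfact q m.+1 = qfact q m * \sum_(r < m.+1) q ^+ r.
Proof. exact: big_ord_recr. Qed.

Lemma qfact_neq0 (F : fieldType) (q : F) m :
  [pchar F] =i pred0 -> ord_1_or_inf q -> qfact q m != 0.
Proof.
move=> charF0 [->|not_root]; apply/prodf_neq0 => k _.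
  rewrite (eq_bigr (fun=> 1)) => [|r _]; last by rewrite expr1n.
  by rewrite sumr_const card_ord (pcharf0P _).1.
apply/eqP => qsum0; apply: not_root; exists k.+1; split => //.
by apply/eqP; rewrite -subr_eq0 subrX1 qsum0 mulr0.
Qed.

Section AdWord.
Variables (F : fieldType) (n : nat) (p : 'I_n -> 'I_n -> F).

Lemma sym_coef_const i m : sym_coef p (fun _ : 'I_m => i) (nseq m i) = qfact (p i i) m.
Proof.
elim: m => [|m IH].
  rewrite /sym_coef /qfact big_ord0 (eq_bigl xpredT) => [|s]; last first.
    by rewrite /fperm_word enum_ord0.
  rewrite (eq_bigr (fun=> 1)) => [|s _]; last by rewrite /fbraid_coef big_ord0.
  by rewrite sumr_const card_Sn.
rewrite [nseq _ _]/= sym_coef_cons (eq_bigl xpredT) => [|r]; last by rewrite eqxx.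
rewrite qfactS mulr_sumr; apply: eq_bigr => r _.
by rewrite (prodr_ord_ltn _ (ltn_ord r : (r <= m)%N)) mulrC IH.
Qed.

Variables (i j : 'I_n).
Hypothesis ij : i != j.

Definition ad_word a b : seq 'I_n := nseq a i ++ j :: nseq b i.

Lemma size_ad_word a b : size (ad_word a b) = (a + b).+1.
Proof. by rewrite /ad_word size_cat /= !size_nseq addnS. Qed.

Lemma nth_ad_word a b k : nth i (ad_word a b) k = if k == a then j else i.
Proof.
rewrite /ad_word nth_cat size_nseq; case: ltngtP => [lt_ka|lt_ak|->]; last by rewrite subnn.
  by rewrite nth_nseq lt_ka.
by rewrite -(subnSK lt_ak) /= nth_nseq if_same.
Qed.

Lemma index_ad_word a b : index j (ad_word a b) = a.
Proof. by elim: a => [|a IH] /=; rewrite ?eqxx // (negbTE ij) IH. Qed.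

Lemma mem_ad_word a b : j \in ad_word a b.
Proof. by rewrite mem_cat inE eqxx orbT. Qed.

Lemma ad_word_pos a b : (a < size (ad_word a b))%N.
Proof. by rewrite size_ad_word ltnS leq_addr. Qed.

Lemma sum_ad_word_letter_j a b (G : 'I_(size (ad_word a b)) -> F) :
  \sum_(r | tnth (in_tuple (ad_word a b)) r == j) G r = G (Ordinal (ad_word_pos a b)).
Proof.
apply: big_pred1 => r; rewrite (tnth_nth i) /= nth_ad_word.
have -> : (r == Ordinal (ad_word_pos a b)) = (val r == a) by [].
by case: ifP; rewrite ?eqxx // (negbTE ij).
Qed.

Lemma tnth_ad_word_lift a b (k : 'I_(size (ad_word a b)).-1) :
  tnth (in_tuple (ad_word a b)) (lift (Ordinal (ad_word_pos a b)) k) = i.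
Proof. by rewrite (tnth_nth i) nth_ad_word /= eq_sym (negbTE (neq_bump _ _)). Qed.

Lemma sym_coef_ad_word_tail a b :
  sym_coef p (tnth (in_tuple (ad_word a b)) \o lift (Ordinal (ad_word_pos a b)))
    (nseq (a + b) i) = qfact (p i i) (a + b).
Proof.
have size_tail : (size (ad_word a b)).-1 = (a + b)%N by rewrite size_ad_word.
rewrite -[in nseq _ _]size_tail (@eq_sym_coef _ _ p _ _ (fun=> i)) => [|k]; last first.
  exact: tnth_ad_word_lift.
by rewrite sym_coef_const size_tail.
Qed.

Lemma sym_coef_ad_word_head a b :
  sym_coef p (tnth (in_tuple (ad_word a b))) (j :: nseq (a + b) i) =
  p i j ^+ a * qfact (p i i) (a + b).
Proof.
rewrite sym_coef_cons sum_ad_word_letter_j sym_coef_ad_word_tail; congr (_ * _).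
rewrite (eq_bigr (fun=> p i j)) => [|k _]; last first.
  by rewrite tnth_ad_word_lift (tnth_nth i) nth_ad_word eqxx.
by rewrite prodr_ord_ltn //= size_ad_word leq_addr.
Qed.

Lemma sym_coef_ad_word_last a b :
  sym_coef p (tnth (in_tuple (ad_word a b))) (rcons (nseq (a + b) i) j) =
  p j i ^+ b * qfact (p i i) (a + b).
Proof.
rewrite sym_coef_rcons sum_ad_word_letter_j sym_coef_ad_word_tail; congr (_ * _).
rewrite (eq_bigr (fun=> p j i)) => [|k _]; last first.
  by rewrite tnth_ad_word_lift (tnth_nth i) nth_ad_word eqxx.
by rewrite prodr_ord_geq /= size_ad_word /= addKn.
Qed.

End AdWord.

Lemma prodr_exp_eq (R : comSemiRingType) n (x : 'I_n -> R) (i : 'I_n) c :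
  \prod_(b < n) x b ^+ (c * (i == b)) = x i ^+ c.
Proof.
rewrite (bigD1 i) //= eqxx muln1 big1 ?mulr1 // => b ne_bi.
by rewrite eq_sym (negbTE ne_bi) muln0 expr0.
Qed.

Section Brackets.
Variables (F : fieldType) (n : nat) (p : 'I_n -> 'I_n -> F).

Definition sym_tcoef (y : seq 'I_n) (u : tens F n) : F :=
  \sum_(a <- u) a.1 * sym_coef p (tnth (in_tuple a.2)) y.

Lemma tcoef_symmetrizer u y : tcoef (symmetrizer p u) y = sym_tcoef y u.
Proof.
rewrite /tcoef /symmetrizer /sym_tcoef big_flatten big_map /=; apply: eq_bigr => a _.
by rewrite big_map big_enum_cond /= /sym_coef mulr_sumr.
Qed.

Lemma sym_tcoef_scale y c u : sym_tcoef y (tscale c u) = c * sym_tcoef y u.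
Proof. by rewrite /sym_tcoef big_map mulr_sumr; apply: eq_bigr => a _; rewrite mulrA. Qed.

Lemma sym_tcoef_flatten y (us : seq (tens F n)) :
  sym_tcoef y (flatten us) = \sum_(u <- us) sym_tcoef y u.
Proof. exact: big_flatten. Qed.

Variables (i j : 'I_n).

Fixpoint ad_tree m : btree n :=
  if m is m'.+1 then BNode (BLeaf i) (ad_tree m') else BLeaf j.

Lemma bdeg_ad_tree m k : bdeg (ad_tree m) k = (m * (i == k) + (j == k))%N.
Proof. by elim: m => [|m IH] //=; rewrite IH mulSn addnA. Qed.

Lemma bichar_leaf_ad_tree m :
  bichar p (bdeg (BLeaf i)) (bdeg (ad_tree m)) = p i i ^+ m * p i j.
Proof.
rewrite /bichar (bigD1 i) //= [X in _ * X]big1 ?mulr1 => [|a ne_ai]; last first.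
  by apply: big1 => b _; rewrite eq_sym (negbTE ne_ai) mul0n expr0.
under eq_bigr do rewrite eqxx mul1n bdeg_ad_tree exprD -[(j == _) : nat]mul1n.
by rewrite big_split /= !prodr_exp_eq.
Qed.

Lemma bichar_ad_tree_leaf m :
  bichar p (bdeg (ad_tree m)) (bdeg (BLeaf i)) = p i i ^+ m * p j i.
Proof.
rewrite /bichar; under eq_bigr => a _.
  rewrite (bigD1 i) //= [X in _ * X]big1 ?mulr1 => [|b ne_bi]; last first.
    by rewrite eq_sym (negbTE ne_bi) muln0 expr0.
  rewrite eqxx muln1 bdeg_ad_tree exprD -[(j == _) : nat]mul1n.
  over.
by rewrite big_split /= !prodr_exp_eq.
Qed.

End Brackets.

Lemma tmul_tletter_l (F : fieldType) n (i : 'I_n) (u : tens F n) :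
  tmul (tletter F i) u = [seq (1 * b.1, i :: b.2) | b <- u].
Proof. by rewrite /tmul /= cats0. Qed.

Lemma tmul_tletter_r (F : fieldType) n (i : 'I_n) (u : tens F n) :
  tmul u (tletter F i) = [seq (b.1 * 1, rcons b.2 i) | b <- u].
Proof. by rewrite /tmul; elim: u => //= a u ->; rewrite cats1. Qed.

Section AdTreeSpan.
Variables (F : fieldType) (n : nat) (p : 'I_n -> 'I_n -> F) (i j : 'I_n).
Hypothesis ij : i != j.

Definition ad_combination m (u : tens F n) :=
  forall a, a \in u -> exists2 k, (k <= m)%N & a.2 = ad_word i j k (m - k).

Definition head_weight (u : tens F n) : F := \sum_(a <- u) a.1 * p i j ^+ index j a.2.

Definition last_weight (u : tens F n) : F :=
  \sum_(a <- u) a.1 * p j i ^+ (size a.2 - (index j a.2).+1).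

Lemma ad_combination_step m u A B : ad_combination m u ->
  ad_combination m.+1 (tscale A (tmul (tletter F i) u) ++ tscale B (tmul u (tletter F i))).
Proof.
move=> hu a; rewrite mem_cat /tscale tmul_tletter_l tmul_tletter_r -!map_comp.
case/orP=> /mapP[b /hu[k le_km eb] ->] /=; rewrite eb.
  by exists k.+1; rewrite ?subSS.
exists k; first exact: leqW.
by rewrite /ad_word rcons_cat rcons_cons subSn // -addn1 nseqD cats1.
Qed.

Lemma head_weight_step m u A B : ad_combination m u ->
  head_weight (tscale A (tmul (tletter F i) u) ++ tscale B (tmul u (tletter F i))) =
  (A * p i j + B) * head_weight u.
Proof.
move=> hu; rewrite /head_weight big_cat /tscale tmul_tletter_l tmul_tletter_r !big_map.
rewrite mulrDl !mulr_sumr; congr (_ + _); apply: eq_big_seq => a /hu[k _ ->] /=.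
  by rewrite (negbTE ij) /= exprS; ring.
by rewrite -cats1 index_cat mem_ad_word mulr1 mulrA.
Qed.

Lemma last_weight_step m u A B : ad_combination m u ->
  last_weight (tscale A (tmul (tletter F i) u) ++ tscale B (tmul u (tletter F i))) =
  (A + B * p j i) * last_weight u.
Proof.
move=> hu; rewrite /last_weight big_cat /tscale tmul_tletter_l tmul_tletter_r !big_map.
rewrite mulrDl !mulr_sumr; congr (_ + _); apply: eq_big_seq => a /hu[k le_km ->] /=.
  by rewrite (negbTE ij) subSS mul1r mulrA.
rewrite -cats1 index_cat mem_ad_word size_cat /= index_ad_word // size_ad_word subnKC //.
rewrite addn1 subSn // exprS; ring.
Qed.

Lemma sym_tcoef_head m u : ad_combination m u ->
  sym_tcoef p (j :: nseq m i) u = head_weight u * qfact (p i i) m.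
Proof.
move=> hu; rewrite /sym_tcoef /head_weight mulr_suml; apply: eq_big_seq => a /hu[k le_km ->].
rewrite -[in nseq m i](subnKC le_km) sym_coef_ad_word_head // subnKC //.
by rewrite index_ad_word // mulrA.
Qed.

Lemma sym_tcoef_last m u : ad_combination m u ->
  sym_tcoef p (rcons (nseq m i) j) u = last_weight u * qfact (p i i) m.
Proof.
move=> hu; rewrite /sym_tcoef /last_weight mulr_suml; apply: eq_big_seq => a /hu[k le_km ->].
rewrite -[in nseq m i](subnKC le_km) sym_coef_ad_word_last // subnKC //.
by rewrite index_ad_word // size_ad_word subSS subnKC // mulrA.
Qed.

Lemma sym_tcoef_size m u y : ad_combination m u -> size y != m.+1 -> sym_tcoef p y u = 0.
Proof.
move=> hu hy; rewrite /sym_tcoef big1_seq // => a /andP[_ /hu[k le_km ->]].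
by rewrite sym_coef_size ?mulr0 // size_ad_word subnKC.
Qed.

End AdTreeSpan.

Section AdTreeEvaluation.
Variables (F : fieldType) (n : nat) (p : 'I_n -> 'I_n -> F) (i j : 'I_n).
Hypothesis ij : i != j.
Variables (ev : btree n -> tens F n) (A B : nat -> F).
Hypothesis ev_leaf : ev (ad_tree i j 0) = tletter F j.
Hypothesis ev_node : forall m, ev (ad_tree i j m.+1) =
  tscale (A m) (tmul (tletter F i) (ev (ad_tree i j m))) ++
  tscale (B m) (tmul (ev (ad_tree i j m)) (tletter F i)).

Lemma ad_combination_ev m : ad_combination i j m (ev (ad_tree i j m)).
Proof.
elim: m => [|m IH]; last by rewrite ev_node; apply: ad_combination_step.
by rewrite ev_leaf => a; rewrite inE => /eqP ->; exists 0%N.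
Qed.
Arguments ad_combination_ev : clear implicits.

Lemma head_weight_ev m :
  head_weight p i j (ev (ad_tree i j m)) = \prod_(k < m) (A k * p i j + B k).
Proof.
elim: m => [|m IH]; first by rewrite ev_leaf big_ord0 /head_weight big_seq1 /= eqxx mulr1.
by rewrite ev_node (head_weight_step p ij _ _ (ad_combination_ev m)) IH big_ord_recr mulrC.
Qed.

Lemma last_weight_ev m :
  last_weight p i j (ev (ad_tree i j m)) = \prod_(k < m) (A k + B k * p j i).
Proof.
elim: m => [|m IH]; first by rewrite ev_leaf big_ord0 /last_weight big_seq1 /= eqxx mulr1.
by rewrite ev_node (last_weight_step p ij _ _ (ad_combination_ev m)) IH big_ord_recr mulrC.
Qed.

Lemma infinite_dim_span_ad_tree (y : nat -> seq 'I_n) :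
  (forall m, size (y m) = m.+1) -> (forall m, sym_tcoef p (y m) (ev (ad_tree i j m)) != 0) ->
  infinite_dim_span p ev.
Proof.
move=> size_y nz_y N; exists (mktuple (fun k : 'I_N => ad_tree i j k)) => c c_zero k0.
have := c_zero (y k0); rewrite tcoef_symmetrizer sym_tcoef_flatten big_map big_enum /=.
under eq_bigr do rewrite tnth_mktuple sym_tcoef_scale.
(* Only the k0-th bracket has the length of [y k0]. *)
rewrite (bigD1 k0) //= big1 ?addr0 => [|k ne_kk0]; last first.
  rewrite (sym_tcoef_size p (ad_combination_ev k)) ?mulr0 // size_y eqSS.
  by apply: contra ne_kk0 => /eqP/val_inj ->.
by move/eqP; rewrite mulf_eq0 (negbTE (nz_y _)) orbF => /eqP.
Qed.

Hypotheses (charF0 : [pchar F] =i pred0) (ord_pii : ord_1_or_inf (p i i)).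

Lemma infinite_dim_span_ad_tree_weights :
  (forall k, A k * p i j + B k != 0) \/ (forall k, A k + B k * p j i != 0) ->
  infinite_dim_span p ev.
Proof.
case=> nz_factors.
  apply: (infinite_dim_span_ad_tree (y := fun m => j :: nseq m i)) => m /=.
    by rewrite size_nseq.
  rewrite (sym_tcoef_head _ ij (ad_combination_ev m)) head_weight_ev.
  by rewrite mulf_neq0 ?qfact_neq0 //; apply/prodf_neq0.
apply: (infinite_dim_span_ad_tree (y := fun m => rcons (nseq m i) j)) => m /=.
  by rewrite size_rcons size_nseq.
rewrite (sym_tcoef_last _ ij (ad_combination_ev m)) last_weight_ev.
by rewrite mulf_neq0 ?qfact_neq0 //; apply/prodf_neq0.
Qed.

End AdTreeEvaluation.

Lemma infinite_dim_span_ad_tree_geom (F : fieldType) n (p : 'I_n -> 'I_n -> F) (i j : 'I_n)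
    (ev : btree n -> tens F n) (a b : F) :
  [pchar F] =i pred0 -> ord_1_or_inf (p i i) -> p i i != 0 -> i != j ->
  ev (ad_tree i j 0) = tletter F j ->
  (forall m, ev (ad_tree i j m.+1) =
     tscale (p i i ^+ m * a) (tmul (tletter F i) (ev (ad_tree i j m))) ++
     tscale (- (p i i ^+ m * b)) (tmul (ev (ad_tree i j m)) (tletter F i))) ->
  a * p i j != b \/ a != b * p j i -> infinite_dim_span p ev.
Proof.
move=> charF0 ord_pii nz_pii ij ev_leaf ev_node nz_ab.
apply: (infinite_dim_span_ad_tree_weights ij ev_leaf ev_node charF0 ord_pii).
case: nz_ab => nz; [left | right] => k; rewrite -subr_eq0 in nz.
  by rewrite -mulrA -mulrBr mulf_neq0 ?expf_neq0.
by rewrite mulNr -mulrA -mulrBr mulf_neq0 ?expf_neq0.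
Qed.

Theorem proposition6p8 (F : fieldType) (n : nat) (p : 'I_n -> 'I_n -> F) :
  [pchar F] =i pred0 ->
  (forall i j, p i j != 0) ->
  ((exists i j : 'I_n, i != j /\ (p i j != p j i ^+ 2 \/ p j i != p i j ^+ 2)
                        /\ ord_1_or_inf (p i i)) ->
     infinite_dim_span p (evalR p)) /\
  ((exists i j : 'I_n, i != j /\ (p i j != 1 \/ p j i != 1)
                        /\ ord_1_or_inf (p i i)) ->
     infinite_dim_span p (evalL p)).
Proof.
move=> charF0 nz_p; split=> -[i [j [ij [ne_p ord_pii]]]].
  apply: (infinite_dim_span_ad_tree_geom (i := i) (j := j) (a := p i j) (b := p j i)) => //.
    by move=> m; rewrite -bichar_leaf_ad_tree -bichar_ad_tree_leaf.
  by rewrite -!expr2 [p i j ^+ 2 == _]eq_sym; case: ne_p; [right | left].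
apply: (infinite_dim_span_ad_tree_geom (i := i) (j := j) (a := p j i) (b := p i j)) => //.
  by move=> m; rewrite -bichar_leaf_ad_tree -bichar_ad_tree_leaf.
case: ne_p => ne1; [right | left].
  by rewrite -{1}[p j i]mul1r (inj_eq (mulIf (nz_p j i))) eq_sym.
by rewrite -{2}[p i j]mul1r (inj_eq (mulIf (nz_p i j))).
Qed.
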